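(* There exists an I$^2$-GNN (a choice of $K$, $T$, $M_t$, $U_t$) such that for every graph $G=(V,E)$, every $i\in V$, every $j\in N(i)$ and every $k\in V_i$, $h^{(T)}_{i,j,k}$ equals the number of $4$-paths of the form $(i\to j\to\cdots\to k)$, i.e. the number of node sequences $i=v_1,\,v_2=j,\,v_3,\,v_4,\,v_5=k$ of pairwise distinct nodes with $(v_s,v_{s+1})\in E$ for $s=1,\dots,4$.
   Context: Graphs are finite, simple, undirected, $G=(V,E)$, possibly carrying node attributes $x_v$ and edge attributes $e_{u,v}$ (a fixed constant when absent); $N(v)$ is the neighbour set of $v$. I$^2$-GNN message passing: specified by an integer $K\ge1$, $T$, and arbitrary functions $M_t$ (values in some $\mathbb R^{d_t}$), $U_t$. For each root $i\in V$, $(V_i,E_i)$ is the subgraph of $G$ induced by nodes at shortest-path distance at most $K$ from $i$, and $N_i(k)=\{l\in V_i:(k,l)\in E_i\}$. For each $j\in N(i)$ and $k\in V_i$: $h^{(0)}_{i,j,k}=x_k\oplus\mathbb 1_{k=i}\oplus\mathbb 1_{k=j}$ ($\oplus$ = concatenation), and $h^{(t+1)}_{i,j,k}=U_t\big(h^{(t)}_{i,j,k},\sum_{l\in N_i(k)}M_t(h^{(t)}_{i,j,k},h^{(t)}_{i,j,l},e_{k,l})\big)$. *)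

From HB Require Import structures.
From mathcomp Require Import all_boot all_order all_algebra.
From mathcomp Require Import reals.
Set Implicit Arguments. Unset Strict Implicit. Unset Printing Implicit Defensive.
Import Order.TTheory GRing.Theory Num.Theory.
Local Open Scope ring_scope.

Definition simple_graph (V : finType) (adj : rel V) : Prop :=
  symmetric adj /\ irreflexive adj.

Definition khop (V : finType) (adj : rel V) (K : nat) (i : V) : {set V} :=
  iter K (fun S : {set V} => S :|: [set l | [exists k in S, adj k l]]) [set i].

(* Dimension of layer t: layer 0 has dimension dx + 1 + 1 (node attribute
   concatenated with the two indicator bits); later layers have dimension D t'. *)
Definition layer_dim (dx : nat) (D : nat -> nat) (t : nat) : nat :=
  match t with 0 => (dx + (1 + 1))%N | t'.+1 => D t' end.

(* The sum ranges over N_i(k) = { l in V_i | (k,l) in E }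
   (only used for k in V_i, where E_i is the induced subgraph). *)
Fixpoint i2gnn_h (R : ringType) (V : finType) (adj : rel V)
  (dx de : nat) (x : V -> 'rV[R]_dx) (e : V -> V -> 'rV[R]_de)
  (K : nat) (D m : nat -> nat)
  (M : forall t, 'rV[R]_(layer_dim dx D t) -> 'rV[R]_(layer_dim dx D t) ->
                 'rV[R]_de -> 'rV[R]_(m t))
  (U : forall t, 'rV[R]_(layer_dim dx D t) -> 'rV[R]_(m t) ->
                 'rV[R]_(layer_dim dx D t.+1))
  (t : nat) (i j k : V) {struct t} : 'rV[R]_(layer_dim dx D t) :=
  match t return 'rV[R]_(layer_dim dx D t) with
  | 0 => row_mx (x k) (row_mx (const_mx (k == i)%:R) (const_mx (k == j)%:R))
  | t'.+1 =>
      U t' (i2gnn_h adj x e K M U t' i j k)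
        (\sum_(l in khop adj K i | adj k l)
            M t' (i2gnn_h adj x e K M U t' i j k)
                 (i2gnn_h adj x e K M U t' i j l) (e k l))
  end.

Definition count_4paths (V : finType) (adj : rel V) (i j k : V) : nat :=
  #|[pred p : V * V | uniq [:: i; j; p.1; p.2; k]
       && adj i j && adj j p.1 && adj p.1 p.2 && adj p.2 k]|.

From mathcomp Require Import all_boot all_order all_algebra.
From mathcomp Require Import reals.
From mathcomp Require Import zify.
Set Implicit Arguments.
Unset Strict Implicit.
Unset Printing Implicit Defensive.
Import GRing.Theory.
Local Open Scope ring_scope.

(* Write off v for [v \notin {i, j}] and N l for the number of neighbours v of l
   such that i, j, v is a path.  A 4-path i, j, v, l, k is determined by its
   last edge l k, with k and l off {i, j}, and by a neighbour v != k of l such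
   that i, j, v is a path, so the number of 4-paths ending at k is
     off k * \sum_(l ~ k) off l * (N l - [i, j, k is a path]).
   Three rounds of message passing compute this: the indicator of j gives
   [i, j, k is a path]; summing it over neighbours gives off k * N k, the
   number of 3-paths ending at k; summing those over neighbours and correcting
   for v = k gives the 4-path count.  Every summand vanishes outside the ball
   of radius 3 around i, so restricting the sums to that ball changes nothing. *)

Section RowEntries.
Variable R : nzRingType.

(* Out-of-range coordinates read as 0. *)
Definition entry n (v : 'rV[R]_n) (p : nat) : R := \sum_(q < n | val q == p) v 0 q.
Definition row_of n (f : nat -> R) : 'rV[R]_n := \row_(q < n) f q.

Lemma entry_row_of n f p : (p < n)%N -> entry (row_of n f) p = f p.
Proof. by move=> ltpn; rewrite /entry (big_pred1 (Ordinal ltpn)) ?mxE. Qed.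

Lemma entry_const (c : R) : entry (const_mx c : 'rV[R]_1) 0 = c.
Proof. by rewrite /entry big_mkcond big_ord1 /= mxE. Qed.

Lemma entry_sum n (I : Type) (r : seq I) (P : pred I) (F : I -> 'rV[R]_n) p :
  entry (\sum_(l <- r | P l) F l) p = \sum_(l <- r | P l) entry (F l) p.
Proof. by rewrite /entry; under eq_bigr do rewrite summxE; exact: exchange_big. Qed.

Lemma entry_row_mxl n1 n2 (a : 'rV[R]_n1) (b : 'rV[R]_n2) p : (p < n1)%N ->
  entry (row_mx a b) p = entry a p.
Proof.
move=> ltpn1; rewrite /entry big_split_ord /= [X in _ + X]big1 ?addr0.
  by apply: eq_big => q //= _; rewrite row_mxEl.
by move=> q /eqP eq_qp; move: ltpn1; rewrite -eq_qp /=; lia.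
Qed.

Lemma entry_row_mxr n1 n2 (a : 'rV[R]_n1) (b : 'rV[R]_n2) p : (n1 <= p)%N ->
  entry (row_mx a b) p = entry b (p - n1).
Proof.
move=> len1p; rewrite /entry big_split_ord /= big1 ?add0r.
  apply: eq_big => q /=; last by move=> _; rewrite row_mxEr.
  by apply/eqP/eqP => [<-|->]; [rewrite addKn | rewrite subnKC].
by move=> q /eqP eq_qp; have := ltn_ord q; rewrite eq_qp /=; lia.
Qed.

Lemma entry_row1 (v : 'rV[R]_1) : entry v 0 = v 0 0.
Proof. by rewrite /entry big_mkcond big_ord1. Qed.

End RowEntries.

Section Indicators.
Variable R : nzRingType.

Lemma sum_indicator (I : finType) (P : pred I) (j : I) :
  \sum_(l | P l) ((l == j)%:R : R) = (P j)%:R.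
Proof.
have [Pj|nPj] := boolP (P j).
  by rewrite (bigD1 j) //= eqxx big1 ?addr0 // => l /andP [_ /negbTE ->].
by rewrite big1 // => l; case: eqP => // ->; rewrite (negbTE nPj).
Qed.

Lemma subr_indicator (b : bool) : 1 - (b%:R : R) = (~~ b)%:R.
Proof. by case: b; rewrite ?subrr ?subr0. Qed.

Lemma mulr_indicator (a b : bool) : (a%:R : R) * b%:R = (a && b)%:R.
Proof. by rewrite -natrM mulnb. Qed.


End Indicators.

Lemma big_in_support (R : nmodType) (I : finType) (A : {pred I}) (P : pred I) (F : I -> R) :
  (forall l, P l -> l \notin A -> F l = 0) ->
  \sum_(l in A | P l) F l = \sum_(l | P l) F l.
Proof.
move=> F0; rewrite [RHS]big_mkcond [LHS]big_mkcond; apply: eq_bigr => l _.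
by case: (boolP (l \in A)) => //= lA; case: ifP => // Pl; rewrite F0.
Qed.

Lemma card_prod_by_snd (T1 T2 : finType) (A : {pred T1 * T2}) :
  #|A| = \sum_(b : T2) #|[pred a | (a, b) \in A]|.
Proof.
rewrite -sum1_card (eq_bigl (fun p => true && ((p.1, p.2) \in A))); last by case.
rewrite -(pair_big_dep xpredT (fun a b => (a, b) \in A) (fun _ _ => 1%N)).
by rewrite (exchange_big_dep xpredT) //=; apply: eq_bigr => b _; rewrite -sum1_card.
Qed.

Section Balls.
Variables (V : finType) (adj : rel V) (i : V).

Lemma mem_khop0 : i \in khop adj 0 i.
Proof. by rewrite inE. Qed.

Lemma mem_khopS n a : a \in khop adj n i -> a \in khop adj n.+1 i.
Proof. by move=> a_in; rewrite /khop iterS -/(khop adj n i) inE a_in. Qed.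

Lemma mem_khop_adj n a b : a \in khop adj n i -> adj a b -> b \in khop adj n.+1 i.
Proof.
move=> a_in ab; rewrite /khop iterS -/(khop adj n i) !inE.
by apply/orP; right; apply/existsP; exists a; rewrite a_in.
Qed.

End Balls.

Section PathCounting.
Local Open Scope nat_scope.
Variables (V : finType) (adj : rel V).
Hypothesis adj_simple : simple_graph adj.
Variables (i j : V).
Hypothesis adj_ij : adj i j.

Definition off_ij (v : V) : bool := (v != i) && (v != j).
Definition path2 (v : V) : bool := off_ij v && adj j v.
Definition path2_nbrs (l : V) : nat := \sum_(v | adj l v) path2 v.

Lemma path4_condE v l k :
  uniq [:: i; j; v; l; k] && adj i j && adj j v && adj v l && adj l k
  = [&& adj k l, off_ij k, off_ij l, adj l v, path2 v & v != k].
Proof.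
have [adj_sym adj_irr] := adj_simple.
have neq_adj a b : adj a b -> a != b by apply: contraTneq => ->; rewrite adj_irr.
rewrite adj_ij (adj_sym k) (adj_sym l v) /path2 /off_ij.
case: (boolP (adj j v)) => [/neq_adj jv|]; last by rewrite !andbF.
case: (boolP (adj v l)) => [/neq_adj vl|]; last by rewrite !andbF.
case: (boolP (adj l k)) => [/neq_adj lk|]; last by rewrite !andbF.
rewrite /= !inE !negb_or (neq_adj _ _ adj_ij) jv vl lk !andbT.
rewrite ![i == _]eq_sym ![j == _]eq_sym (eq_sym v j) jv.
by do !case: (_ == _).
Qed.

Lemma count_4paths_last_edge k :
  count_4paths adj i j k = \sum_(l | adj k l)
    (off_ij k && off_ij l) * #|[pred v | [&& adj l v, path2 v & v != k]]|.
Proof.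
rewrite /count_4paths card_prod_by_snd [RHS]big_mkcond; apply: eq_bigr => l _.
rewrite (@eq_card _ _
  [pred v | [&& adj k l, off_ij k, off_ij l, adj l v, path2 v & v != k]]) => [|v].
  by case: (adj k l) (off_ij k) (off_ij l) => [] [] [] /=; rewrite ?mul1n ?mul0n;
    [apply: eq_card | apply: eq_card0 ..].
by rewrite !inE; exact: path4_condE.
Qed.

Lemma path2_nbrsD1 k l : adj l k ->
  #|[pred v | [&& adj l v, path2 v & v != k]]| + path2 k = path2_nbrs l.
Proof.
move=> lk; rewrite /path2_nbrs (bigD1 k) //= addnC; congr (_ + _).
rewrite -sum1_card big_mkcond [RHS]big_mkcond; apply: eq_bigr => v _.
by rewrite !inE; case: (adj l v) (path2 v) (v != k) => [] [] [].
Qed.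

Lemma count_4paths_recurrence (R : nzRingType) k :
  ((count_4paths adj i j k)%:R = (off_ij k)%:R * \sum_(l | adj k l)
    ((off_ij l)%:R * (path2_nbrs l)%:R - (path2 k)%:R * (off_ij l)%:R) :> R)%R.
Proof.
rewrite count_4paths_last_edge natr_sum mulr_sumr; apply: eq_bigr => l kl.
rewrite -(path2_nbrsD1 (etrans (proj1 adj_simple l k) kl)) -!natrM (mulnC (path2 k)).
by rewrite mulnDr natrD addrK -natrM mulnA mulnb.
Qed.

Lemma path2_in_khop v : path2 v -> v \in khop adj 2 i.
Proof.
by case/andP=> _; apply/mem_khop_adj/mem_khop_adj/adj_ij/mem_khop0.
Qed.

Lemma path2_adj_in_khop v l : path2 v -> adj v l -> l \in khop adj 3 i.
Proof. by move/path2_in_khop; exact: mem_khop_adj. Qed.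

End PathCounting.

Section Unfolding.
Variables (R : nzRingType) (V : finType) (adj : rel V) (dx de : nat).
Variables (x : V -> 'rV[R]_dx) (e : V -> V -> 'rV[R]_de) (K : nat) (D m : nat -> nat).
Variable M : forall t, 'rV[R]_(layer_dim dx D t) -> 'rV[R]_(layer_dim dx D t) ->
                       'rV[R]_de -> 'rV[R]_(m t).
Variable U : forall t, 'rV[R]_(layer_dim dx D t) -> 'rV[R]_(m t) ->
                       'rV[R]_(layer_dim dx D t.+1).

Local Notation h := (i2gnn_h adj x e K M U).

Lemma i2gnn_h0 i j k :
  h 0 i j k = row_mx (x k) (row_mx (const_mx (k == i)%:R) (const_mx (k == j)%:R)).
Proof. by []. Qed.

Lemma i2gnn_hS t i j k : h t.+1 i j k =
  @U t (h t i j k) (\sum_(l in khop adj K i | adj k l) @M t (h t i j k) (h t i j l) (e k l)).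
Proof. by []. Qed.

End Unfolding.

Section Network.
Variables (R : nzRingType) (dx de : nat).

Definition path4_width (t : nat) : nat := if t is 2 then 1 else 4.
Definition msg_width (t : nat) : nat := 1.

Definition gate n (a : 'rV[R]_n) (p : nat) : R := (1 - entry a p) * (1 - entry a p.+1).

(* Layer 0 holds [k == i] and [k == j] at positions dx and dx.+1; layers 1
   and 2 hold them at positions 0 and 1, followed by [i, j, k is a path] and,
   in layer 2, the number of 3-paths ending at k.  gate turns the two
   indicators into [k \notin {i, j}]. *)
Definition path4_msg (t : nat) :
    'rV[R]_(layer_dim dx path4_width t) -> 'rV[R]_(layer_dim dx path4_width t) ->
    'rV[R]_de -> 'rV[R]_(msg_width t) := fun a b _ =>
  const_mx (match t with
            | 0 => entry b dx.+1
            | 1 => entry b 2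
            | _ => entry b 3 - entry a 2 * gate b 0
            end).

Definition path4_upd (t : nat) :
    'rV[R]_(layer_dim dx path4_width t) -> 'rV[R]_(msg_width t) ->
    'rV[R]_(layer_dim dx path4_width t.+1) := fun a s =>
  row_of _ (fun q => match t with
    | 0 => nth 0 [:: entry a dx; entry a dx.+1; gate a dx * entry s 0] q
    | 1 => nth 0 [:: entry a 0; entry a 1; entry a 2; gate a 0 * entry s 0] q
    | _ => gate a 0 * entry s 0
    end).

Arguments path4_msg : clear implicits.
Arguments path4_upd : clear implicits.

Lemma path4_msgE t a b u : entry (path4_msg t a b u) 0 =
  match t with
  | 0 => entry b dx.+1
  | 1 => entry b 2
  | _ => entry b 3 - entry a 2 * gate b 0
  end.
Proof. exact: entry_const. Qed.

Lemma path4_upd0E a s :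
  [/\ entry (path4_upd 0 a s) 0 = entry a dx, entry (path4_upd 0 a s) 1 = entry a dx.+1
    & entry (path4_upd 0 a s) 2 = gate a dx * entry s 0].
Proof. by rewrite /path4_upd !entry_row_of. Qed.

Lemma path4_upd1E a s :
  [/\ entry (path4_upd 1 a s) 0 = entry a 0, entry (path4_upd 1 a s) 1 = entry a 1,
      entry (path4_upd 1 a s) 2 = entry a 2
    & entry (path4_upd 1 a s) 3 = gate a 0 * entry s 0].
Proof. by rewrite /path4_upd !entry_row_of. Qed.

Lemma path4_upd2E a s : entry (path4_upd 2 a s) 0 = gate a 0 * entry s 0.
Proof. by rewrite /path4_upd !entry_row_of. Qed.

Variables (V : finType) (adj : rel V) (x : V -> 'rV[R]_dx) (e : V -> V -> 'rV[R]_de).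
Hypothesis adj_simple : simple_graph adj.
Variables (i j : V).
Hypothesis adj_ij : adj i j.

Local Notation h := (i2gnn_h adj x e 3 path4_msg path4_upd).
Local Notation ball := (khop adj 3 i).

Lemma gate_off_ij n (a : 'rV[R]_n) p k :
  entry a p = (k == i)%:R -> entry a p.+1 = (k == j)%:R -> gate a p = (off_ij i j k)%:R.
Proof. by rewrite /gate => -> ->; rewrite !subr_indicator mulr_indicator. Qed.

Lemma path4_h0E k :
  entry (h 0 i j k) dx = (k == i)%:R /\ entry (h 0 i j k) dx.+1 = (k == j)%:R.
Proof.
split; rewrite i2gnn_h0 entry_row_mxr ?leqnSn // ?subnn ?subSnn.
  by rewrite entry_row_mxl // entry_const.
by rewrite entry_row_mxr // subnn entry_const.
Qed.

Lemma path4_h1E k : [/\ entry (h 1 i j k) 0 = (k == i)%:R, entry (h 1 i j k) 1 = (k == j)%:R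
   & entry (h 1 i j k) 2 = (path2 adj i j k)%:R].
Proof.
have [h0i h0j] := path4_h0E k.
rewrite i2gnn_hS; set s := \sum_(l in _ | _) _.
have [-> -> ->] := path4_upd0E (h 0 i j k) s; split=> //.
rewrite (gate_off_ij h0i h0j) entry_sum.
under eq_bigr do rewrite path4_msgE (proj2 (path4_h0E _)).
rewrite big_in_support => [|l _]; last by case: eqP => // -> /negP[];
  exact: mem_khopS (mem_khopS (mem_khop_adj (mem_khop0 adj i) adj_ij)).
by rewrite sum_indicator mulr_indicator (proj1 adj_simple k j).
Qed.

Lemma path4_h2E k : [/\ entry (h 2 i j k) 0 = (k == i)%:R, entry (h 2 i j k) 1 = (k == j)%:R,
   entry (h 2 i j k) 2 = (path2 adj i j k)%:R
   & entry (h 2 i j k) 3 = (off_ij i j k)%:R * (path2_nbrs adj i j k)%:R].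
Proof.
have [h1i h1j h1p] := path4_h1E k.
rewrite i2gnn_hS; set s := \sum_(l in _ | _) _.
have [-> -> -> ->] := path4_upd1E (h 1 i j k) s; split=> //.
rewrite (gate_off_ij h1i h1j) entry_sum; congr (_ * _).
have h1_path2 l : entry (h 1 i j l) 2 = (path2 adj i j l)%:R by case: (path4_h1E l).
under eq_bigr do rewrite path4_msgE h1_path2.
rewrite big_in_support => [|l _ lout]; last first.
  by case: (boolP (path2 adj i j l)) lout => // /(path2_in_khop adj_ij)/mem_khopS ->.
by rewrite /path2_nbrs natr_sum.
Qed.

Lemma path4_h3E k : entry (h 3 i j k) 0 = (off_ij i j k)%:R * \sum_(l | adj k l)
  ((off_ij i j l)%:R * (path2_nbrs adj i j l)%:R - (path2 adj i j k)%:R * (off_ij i j l)%:R).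
Proof.
have [h2i h2j h2p _] := path4_h2E k.
rewrite i2gnn_hS path4_upd2E (gate_off_ij h2i h2j) entry_sum; congr (_ * _).
have h2_msg l : entry (h 2 i j l) 3 - (path2 adj i j k)%:R * gate (h 2 i j l) 0
    = (off_ij i j l)%:R * (path2_nbrs adj i j l)%:R - (path2 adj i j k)%:R * (off_ij i j l)%:R.
  by have [h2li h2lj _ ->] := path4_h2E l; rewrite (gate_off_ij h2li h2lj).
under eq_bigr do rewrite path4_msgE h2p h2_msg.
rewrite big_in_support // => l kl lout.
have nbrs0 : path2_nbrs adj i j l = 0%N.
  rewrite /path2_nbrs big1 // => v lv; case: (boolP (path2 adj i j v)) => // pv.
  by rewrite (path2_adj_in_khop adj_ij pv) ?(proj1 adj_simple v) in lout.
have /negbTE pk : ~~ path2 adj i j k.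
  by apply/negP => pk; rewrite (path2_adj_in_khop adj_ij pk kl) in lout.
by rewrite nbrs0 pk mulr0 mul0r subr0.
Qed.

End Network.
Arguments path4_msg {R dx de} t.
Arguments path4_upd {R dx} t.

Theorem lemma3 (R : realType) (dx de : nat) :
  exists (K T : nat) (D m : nat -> nat)
    (M : forall t, 'rV[R]_(layer_dim dx D t) -> 'rV[R]_(layer_dim dx D t) ->
                   'rV[R]_de -> 'rV[R]_(m t))
    (U : forall t, 'rV[R]_(layer_dim dx D t) -> 'rV[R]_(m t) ->
                   'rV[R]_(layer_dim dx D t.+1))
    (HT : layer_dim dx D T = 1%N),
  (1 <= K)%N /\
  forall (V : finType) (adj : rel V) (x : V -> 'rV[R]_dx)
         (e : V -> V -> 'rV[R]_de),
    simple_graph adj ->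
    (forall k l, e k l = e l k) ->
    forall i j k : V, adj i j -> k \in khop adj K i ->
      castmx (erefl 1%N, HT) (i2gnn_h adj x e K M U T i j k)
      = const_mx (count_4paths adj i j k)%:R.
Proof.
exists 3%N, 3%N, path4_width, msg_width, path4_msg, path4_upd, erefl.
(* Edge attributes are ignored, and the count is correct for every k. *)
split=> // V adj x e adj_simple _ i j k adj_ij _.
rewrite castmx_id; apply/rowP => a; rewrite ord1 [RHS]mxE -entry_row1.
by rewrite (path4_h3E _ _ adj_simple adj_ij) (count_4paths_recurrence adj_simple adj_ij).
Qed.
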